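(* Let $n$ be even, $V=V_1\sqcup V_2$ with $|V_1|=|V_2|=n/2$, and $0\le q<p\le1$ with $p>0$. Consider the complete weighted graph on $V$ with $w(u,v)=p$ for distinct $u,v$ in the same block, $w(u,v)=q$ for $u,v$ in different blocks, and $w(v,v)=0$, and the cost $c(\{A,A^\complement\})=\sum_{u\in A,v\in A^\complement}w(u,v)$. If $\{A,A^\complement\}$ is a local minimum cut, then for each $i\in\{1,2\}$ either $V_i\subseteq A$ or $V_i\subseteq A^\complement$.
   Context: A cut $\{A,A^\complement\}$ of $V$ is a local minimum if moving any single vertex $v\in V$ to the other side (i.e., replacing the cut by $\{A\setminus\{v\},A^\complement\cup\{v\}\}$ if $v\in A$, or by $\{A\cup\{v\},A^\complement\setminus\{v\}\}$ if $v\in A^\complement$) does not decrease the cost. *)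

From mathcomp Require Import all_boot all_order all_algebra.
Set Implicit Arguments. Unset Strict Implicit. Unset Printing Implicit Defensive.
Import Order.TTheory GRing.Theory Num.Theory.
Local Open Scope ring_scope.

Definition sbm_w (R : numDomainType) (n : nat) (V1 V2 : {set 'I_n}) (p q : R)
  (u v : 'I_n) : R :=
  if u == v then 0
  else if ((u \in V1) && (v \in V1)) || ((u \in V2) && (v \in V2)) then p
  else q.

Definition cut_cost (R : numDomainType) (n : nat) (w : 'I_n -> 'I_n -> R)
  (A : {set 'I_n}) : R :=
  \sum_(u in A) \sum_(v in ~: A) w u v.

Definition move_vertex (n : nat) (A : {set 'I_n}) (v : 'I_n) : {set 'I_n} :=
  if v \in A then A :\ v else v |: A.

Definition local_min_cut (R : numDomainType) (n : nat) (w : 'I_n -> 'I_n -> R)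
  (A : {set 'I_n}) : Prop :=
  forall v : 'I_n, cut_cost w A <= cut_cost w (move_vertex A v).

From mathcomp Require Import all_boot all_order all_algebra.
Set Implicit Arguments. Unset Strict Implicit. Unset Printing Implicit Defensive.
Import Order.TTheory GRing.Theory Num.Theory.
Local Open Scope ring_scope.

(* Two distinct vertices of the same block are twins (same weight to every
   other vertex) joined by an edge of weight p > 0.  Moving one of two twins
   across the cut and moving the other one across change the cost by amounts
   summing to -2p, so a local minimum never separates them. *)

Section CutMoves.
Variables (R : numDomainType) (n : nat) (w : 'I_n -> 'I_n -> R).
Implicit Types (A : {set 'I_n}) (u v : 'I_n).

Lemma cut_cost_setD1 A v : v \in A ->
  cut_cost w (A :\ v) + \sum_(y in ~: A) w v y
  = cut_cost w A + \sum_(x in A :\ v) w x v.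
Proof.
move=> vA; have vNC : v \notin ~: A by rewrite inE negbK.
rewrite /cut_cost; have -> : ~: (A :\ v) = v |: ~: A.
  by apply/setP => y; rewrite !inE negb_and negbK.
rewrite (big_setD1 v vA) /=.
under eq_bigr => x _ do rewrite (big_setU1 _ vNC) /=.
by rewrite big_split /= addrAC -addrA addrC.
Qed.

Lemma cut_cost_setU1 A u : u \notin A ->
  cut_cost w (u |: A) + \sum_(x in A) w x u
  = cut_cost w A + \sum_(y in ~: A :\ u) w u y.
Proof.
move=> uNA; have uC : u \in ~: A by rewrite inE.
rewrite /cut_cost; have -> : ~: (u |: A) = ~: A :\ u.
  by apply/setP => y; rewrite !inE negb_or.
rewrite (big_setU1 _ uNA) /=.
under [X in _ = X + _]eq_bigr => x _ do rewrite (big_setD1 u uC) /=.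
by rewrite big_split /= addrAC -addrA addrC.
Qed.

End CutMoves.

Definition twins (R : numDomainType) (n : nat) (w : 'I_n -> 'I_n -> R)
  (u v : 'I_n) : Prop :=
  forall x, x != u -> x != v -> w x u = w x v.

Section TwinsNotSeparated.
Variables (R : numDomainType) (n : nat) (w : 'I_n -> 'I_n -> R).
Hypothesis w_sym : forall x y, w x y = w y x.

(* Moving [v] out of [A] and moving [u] into [A] change the cost by
   [S1 - S2 - w u v] and [S2 - S1 - w u v] respectively, since twins have the
   same weights [S1] to [A :\ v] and [S2] to [~: A :\ u]. *)
Lemma local_min_cut_twins A u v :
  local_min_cut w A -> twins w u v -> 0 < w u v ->
  v \in A -> u \in A.
Proof.
move=> minA tw wuv_gt0 vA; apply: contraT => uNA.
have uC : u \in ~: A by rewrite inE.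
set S1 := \sum_(x in A :\ v) w x v.
set S2 := \sum_(y in ~: A :\ u) w u y.
have S2_v : \sum_(y in ~: A) w v y = w u v + S2.
  rewrite (big_setD1 u uC) /= w_sym; congr (_ + _); apply: eq_bigr => y.
  rewrite !inE => /andP[yu yNA].
  have yv : y != v by apply: contraNneq yNA => ->.
  by rewrite w_sym -tw // w_sym.
have S1_u : \sum_(x in A) w x u = w u v + S1.
  rewrite (big_setD1 v vA) /= w_sym; congr (_ + _); apply: eq_bigr => x.
  rewrite !inE => /andP[xv xA].
  have xu : x != u by apply: contraNneq uNA => <-.
  exact: tw.
have move_v := minA v; rewrite /move_vertex vA in move_v.
have move_u := minA u; rewrite /move_vertex (negbTE uNA) in move_u.
have le_v : w u v + S2 <= S1.
  rewrite -(lerD2l (cut_cost w A)) -[_ + S1](cut_cost_setD1 _ vA).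
  by rewrite S2_v lerD2r.
have le_u : w u v + S1 <= S2.
  rewrite -(lerD2l (cut_cost w A)) -(cut_cost_setU1 _ uNA).
  by rewrite S1_u lerD2r.
have := lerD le_v le_u; rewrite addrACA [S1 + S2]addrC gerDr.
by rewrite lt_geF // addr_gt0.
Qed.

Lemma twins_clique_one_side (W A : {set 'I_n}) :
  local_min_cut w A ->
  {in W &, forall u v, u != v -> twins w u v /\ 0 < w u v} ->
  W \subset A \/ W \subset ~: A.
Proof.
move=> minA twW.
have [|/subsetPn[u uW uNA]] := boolP (W \subset A); first by left.
right; apply/subsetP => v vW; rewrite inE; apply: contra uNA => vA.
have [->//|uv] := eqVneq u v.
by have [tw pos] := twW u v uW vW uv; exact: local_min_cut_twins tw pos vA.
Qed.

End TwinsNotSeparated.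

Section TwoBlockWeights.
Variables (R : numDomainType) (n : nat) (V1 V2 : {set 'I_n}) (p q : R).
Hypothesis V12 : [disjoint V1 & V2].

Lemma sbm_w_sym x y : sbm_w V1 V2 p q x y = sbm_w V1 V2 p q y x.
Proof. by rewrite /sbm_w eq_sym (andbC (y \in V1)) (andbC (y \in V2)). Qed.

Lemma sbm_w_within_block (W : {set 'I_n}) : W = V1 \/ W = V2 ->
  {in W &, forall u v, u != v ->
    twins (sbm_w V1 V2 p q) u v /\ sbm_w V1 V2 p q u v = p}.
Proof.
have V1N2 x : x \in V1 -> x \notin V2 by move=> xV1; rewrite (disjointFr V12).
have V2N1 x : x \in V2 -> x \notin V1 by move=> xV2; rewrite (disjointFl V12).
move=> WV u v uW vW uv; split; last first.
  by rewrite /sbm_w (negbTE uv); case: WV uW vW => -> -> ->; rewrite ?orbT.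
move=> x xu xv; rewrite /sbm_w (negbTE xu) (negbTE xv).
case: WV uW vW => -> uW vW.
  by rewrite (negbTE (V1N2 _ uW)) (negbTE (V1N2 _ vW)) uW vW.
by rewrite (negbTE (V2N1 _ uW)) (negbTE (V2N1 _ vW)) uW vW.
Qed.

End TwoBlockWeights.

Theorem lemma5 (R : realFieldType) (n : nat) (V1 V2 : {set 'I_n}) (p q : R)
  (A : {set 'I_n}) :
  ~~ odd n ->
  [disjoint V1 & V2] -> V1 :|: V2 = setT ->
  #|V1| = n./2 -> #|V2| = n./2 ->
  0 <= q -> q < p -> p <= 1 -> 0 < p ->
  local_min_cut (sbm_w V1 V2 p q) A ->
  (V1 \subset A \/ V1 \subset ~: A) /\ (V2 \subset A \/ V2 \subset ~: A).
Proof.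
move=> _ V12 _ _ _ _ _ _ p_gt0 minA.
have block_one_side W : W = V1 \/ W = V2 -> W \subset A \/ W \subset ~: A.
  move=> WV; apply: (twins_clique_one_side (@sbm_w_sym _ _ V1 V2 p q) minA).
  move=> u v uW vW uv; have [tw ->] := sbm_w_within_block p q V12 WV uW vW uv.
  by split.
by split; apply: block_one_side; [left | right].
Qed.
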